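(* Let $x,y\in B$ with $|x|=|y|$, $\delta(x)=3$ and $\delta(y)=1$. Then $s([x]_2)<s([y]_2)$.
   Context: Stern's sequence $(a(n))_{n\ge0}$: $a(0)=0$, $a(1)=1$, $a(2n)=a(n)$, $a(2n+1)=a(n)+a(n+1)$; $s(n)=a(n+1)$. For a binary string $x$, $[x]_2$ is the integer it represents in base 2 and $|x|$ its length. $B$ denotes the set of nonempty binary strings that are concatenations of blocks each equal to $10$ or $100$; for $x\in B$, $\delta(x)$ is the number of $0$s minus the number of $1$s in $x$, which equals the number of $100$ blocks. *)

From mathcomp Require Import all_boot.
From mathcomp Require Import all_algebra.
Set Implicit Arguments. Unset Strict Implicit. Unset Printing Implicit Defensive.

Fixpoint stern_fuel (f n : nat) : nat :=
  match f with
  | 0 => 0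
  | f'.+1 =>
    if n <= 1 then n
    else if odd n then stern_fuel f' n./2 + stern_fuel f' n./2.+1
    else stern_fuel f' n./2
  end.

Definition stern_a (n : nat) : nat := stern_fuel n.+1 n.

Definition stern_s (n : nat) : nat := stern_a n.+1.

(* binary strings: seq bool, true = '1', most significant bit first *)
Definition bin_val (x : seq bool) : nat :=
  foldl (fun acc (b : bool) => acc.*2 + b) 0 x.

Inductive inB : seq bool -> Prop :=
  | inB_10 : inB [:: true; false]
  | inB_100 : inB [:: true; false; false]
  | inB_cat10 : forall x, inB x -> inB (x ++ [:: true; false])
  | inB_cat100 : forall x, inB x -> inB (x ++ [:: true; false; false]).

Definition delta (x : seq bool) : int :=
  (count (fun b => ~~ b) x)%:Z - (count id x)%:Z.

Lemma stern_sanity : [seq stern_a n | n <- iota 0 12] = [:: 0;1;1;2;1;3;2;3;1;4;3;5].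
Proof. by []. Qed.
Lemma bin_sanity : bin_val [:: true; false; false] = 4. Proof. by []. Qed.

From mathcomp Require Import all_boot all_order all_algebra zify ring lra realalg.
Import Order.TTheory GRing.Theory Num.Theory.
Set Implicit Arguments. Unset Strict Implicit. Unset Printing Implicit Defensive.

(* For a binary string x write u(x) = a([x]_2) and v(x) = a([x]_2 + 1), so that
   s([x]_2) = v(x).  By the Stern recurrences, appending a bit 0 maps (u, v) to
   (u, u + v) and appending a bit 1 maps it to (u + v, v); hence the block 10 acts as
   (u, v) |-> (u + v, u + 2v) and the block 100 as (u, v) |-> (u + v, 2u + 3v), starting
   from (0, 1) for the empty string.  Both block maps preserve u (u + v) <= v^2, i.e.
   u/v <= 1/phi for the golden ratio phi, and produce v <= 3u.
   In a real field containing phi, the weight W = u + phi v is multiplied by exactly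
   phi^2 under the block 10 (phi^2 is the dominant eigenvalue of its matrix), and by a
   factor between phi + 2 and 19/5 under the block 100.  So a string of B with k blocks 10
   and d blocks 100 has (phi + 2)^d phi^(2k+1) <= W <= (19/5)^d phi^(2k+1), and W is
   comparable to v: (phi + 1/3) v <= W <= (2 phi - 1) v.  If |x| = |y|, delta(x) = 3 and
   delta(y) = 1, then x has blocks (k, 3) and y has blocks (k + 3, 1), and v(x) < v(y)
   follows from the numerical inequality (19/5)^3 (2 phi - 1) < (phi + 2) phi^6 (phi + 1/3). *)

Lemma stern_fuel_indep f g n : n < f -> n < g -> stern_fuel f n = stern_fuel g n.
Proof.
elim: f g n => [|f IH] [|g] n //= lt_n_f lt_n_g.
case: ifP => // n_gt1; have := odd_double_half n.
rewrite -!muln2; case: ifP => odd_n /= n_eq.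
- by rewrite (IH g n./2) ?(IH g n./2.+1) //; lia.
- by rewrite (IH g n./2) //; lia.
Qed.

Lemma stern_fuelE f n : n < f -> stern_fuel f n = stern_a n.
Proof. by move=> lt_n_f; apply: stern_fuel_indep. Qed.

Lemma stern_fuel_succ f n : stern_fuel f.+1 n =
  if n <= 1 then n
  else if odd n then stern_fuel f n./2 + stern_fuel f n./2.+1
  else stern_fuel f n./2.
Proof. by []. Qed.

Lemma stern_a_double n : stern_a n.*2 = stern_a n.
Proof.
case: n => [|n] //; move: n.+1 (ltn0Sn n) => m m_gt0.
rewrite {1}/stern_a stern_fuel_succ odd_double doubleK.
have -> : (m.*2 <= 1) = false by rewrite -muln2; lia.
by apply: stern_fuelE; rewrite -muln2; lia.
Qed.

Lemma stern_a_doubleS n : stern_a n.*2.+1 = stern_a n + stern_a n.+1.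
Proof.
case: n => [|n] //; move: n.+1 (ltn0Sn n) => m m_gt0.
rewrite {1}/stern_a stern_fuel_succ.
have -> : (m.*2.+1 <= 1) = false by rewrite -muln2; lia.
have -> : odd m.*2.+1 by rewrite oddS odd_double.
have -> : (m.*2.+1)./2 = m by rewrite -[_./2]/(uphalf m.*2) uphalf_double.
by rewrite !stern_fuelE // -muln2; lia.
Qed.

Lemma bin_val_rcons x b : bin_val (rcons x b) = (bin_val x).*2 + b.
Proof. by rewrite /bin_val -cats1 foldl_cat. Qed.

Definition stern_u (x : seq bool) : nat := stern_a (bin_val x).
Definition stern_v (x : seq bool) : nat := stern_a (bin_val x).+1.

Lemma stern_uv_rcons_false x :
  stern_u (rcons x false) = stern_u x /\
  stern_v (rcons x false) = stern_u x + stern_v x.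
Proof.
by rewrite /stern_u /stern_v bin_val_rcons addn0 stern_a_double stern_a_doubleS.
Qed.

Lemma stern_uv_rcons_true x :
  stern_u (rcons x true) = stern_u x + stern_v x /\
  stern_v (rcons x true) = stern_v x.
Proof.
by rewrite /stern_u /stern_v bin_val_rcons addn1 stern_a_doubleS -doubleS stern_a_double.
Qed.

Lemma stern_uv_cat10 x :
  stern_u (x ++ [:: true; false]) = stern_u x + stern_v x /\
  stern_v (x ++ [:: true; false]) = stern_u x + 2 * stern_v x.
Proof.
rewrite -[x ++ _]/(x ++ [:: true] ++ [:: false]) catA !cats1.
have [-> ->] := stern_uv_rcons_false (rcons x true).
by have [-> ->] := stern_uv_rcons_true x; split=> //; lia.
Qed.

Lemma stern_uv_cat100 x :
  stern_u (x ++ [:: true; false; false]) = stern_u x + stern_v x /\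
  stern_v (x ++ [:: true; false; false]) = 2 * stern_u x + 3 * stern_v x.
Proof.
rewrite -[x ++ _]/(x ++ [:: true; false] ++ [:: false]) catA cats1.
have [-> ->] := stern_uv_rcons_false (x ++ [:: true; false]).
by have [-> ->] := stern_uv_cat10 x; split=> //; lia.
Qed.

(* Every string of B ends with a block, after which v <= 3u. *)
Lemma stern_v_le_3u x : inB x -> stern_v x <= 3 * stern_u x.
Proof.
case=> [|| y _ | y _] //.
- by have [-> ->] := stern_uv_cat10 y; lia.
- by have [-> ->] := stern_uv_cat100 y; lia.
Qed.

Lemma stern_uv_ratio x :
  inB x -> stern_u x * (stern_u x + stern_v x) <= stern_v x * stern_v x.
Proof.
elim=> [|| y _ IH | y _ _] //.
- by have [-> ->] := stern_uv_cat10 y; nia.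
- by have [-> ->] := stern_uv_cat100 y; nia.
Qed.

Definition golden (R : rcfType) : R := ((1 + Num.sqrt 5) / 2)%R.

Section GoldenRatio.
Local Open Scope ring_scope.
Variable R : rcfType.

Lemma golden_sq : golden R ^+ 2 = golden R + 1.
Proof.
have sqrt5_sq := @sqr_sqrtr R 5 ltac:(by []).
rewrite /golden; set s := Num.sqrt 5.
have -> : ((1 + s) / 2) ^+ 2 = (1 + 2 * s + s ^+ 2) / 4 by field.
by rewrite sqrt5_sq; field.
Qed.

Lemma golden_gt0 : 0 < golden R.
Proof. by rewrite /golden; have := @sqrtr_ge0 R 5; lra. Qed.

End GoldenRatio.

Section GoldenWeight.
Local Open Scope ring_scope.
Variable R : realFieldType.
Variable phi : R.
Hypothesis phi_sq : phi ^+ 2 = phi + 1.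
Hypothesis phi_gt0 : 0 < phi.

Lemma golden_bounds : 21/13 < phi < 13/8.
Proof.
have sq := phi_sq; have pos := phi_gt0.
have lo : 21/13 < phi by nra.
have hi : phi < 13/8 by nra.
by rewrite lo hi.
Qed.

(* Identities between polynomials in phi hold modulo X^2 - X - 1. *)
Lemma golden_reduce (a b c : R) : a - b = (phi ^+ 2 - phi - 1) * c -> a = b.
Proof. by move=> eq_ab; apply/eqP; rewrite -subr_eq0 eq_ab phi_sq; apply/eqP; ring. Qed.

Definition golden_weight (x : seq bool) : R := (stern_u x)%:R + phi * (stern_v x)%:R.

Definition weight_bounded (x : seq bool) (k d : nat) : Prop :=
  (phi + 2) ^+ d * phi ^+ (2 * k + 1) <= golden_weight x <=
  (19/5) ^+ d * phi ^+ (2 * k + 1).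

Lemma weight_bounded_nil : weight_bounded [::] 0 0.
Proof.
rewrite /weight_bounded /golden_weight.
have [-> ->] : stern_u [::] = 0%N /\ stern_v [::] = 1%N by [].
by rewrite muln0 add0n !expr0 !mul1r mulr1 expr1 add0r lexx.
Qed.

Lemma golden_weight_cat10 x :
  golden_weight (x ++ [:: true; false]) = phi ^+ 2 * golden_weight x.
Proof.
rewrite /golden_weight; have [-> ->] := stern_uv_cat10 x; rewrite !natrD.
by apply: (golden_reduce (c := - ((stern_u x)%:R + (phi + 1) * (stern_v x)%:R))); ring.
Qed.

Lemma golden_weight_cat100_ge x :
  (phi + 2) * golden_weight x <= golden_weight (x ++ [:: true; false; false]).
Proof.
rewrite /golden_weight; have [-> ->] := stern_uv_cat100 x; rewrite !natrD -subr_ge0.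
set gain := (X in 0 <= X).
have -> : gain = (phi - 1) * (stern_u x)%:R.
  by apply: (golden_reduce (c := - (stern_v x)%:R)); rewrite /gain; ring.
by rewrite mulr_ge0 // subr_ge0; have [lo _] := andP golden_bounds; lra.
Qed.

Lemma golden_ratio_le (u v : R) :
  0 <= u -> 0 <= v -> u * (u + v) <= v * v -> u <= (phi - 1) * v.
Proof.
move=> u_ge0 v_ge0 ratio; rewrite leNgt; apply/negP => lt_w_u.
have [lo _] := andP golden_bounds.
have w_ge0 : 0 <= (phi - 1) * v by rewrite mulr_ge0 // subr_ge0; lra.
have w_eq : (phi - 1) * v * ((phi - 1) * v + v) = v * v.
  by apply: (golden_reduce (c := v * v)); ring.
nra.
Qed.

Lemma golden_weight_cat100_le x :
  (stern_u x * (stern_u x + stern_v x) <= stern_v x * stern_v x)%N ->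
  golden_weight (x ++ [:: true; false; false]) <= 19/5 * golden_weight x.
Proof.
rewrite -(ler_nat R) !natrM natrD => ratio.
have := golden_ratio_le (ler0n _ _) (ler0n _ _) ratio.
have [lo hi] := andP golden_bounds.
rewrite /golden_weight; have [-> ->] := stern_uv_cat100 x.
rewrite !natrD; move: (ler0n R (stern_u x)) (ler0n R (stern_v x)).
by move: (stern_u x)%:R (stern_v x)%:R => u v *; nra.
Qed.

Lemma weight_bounded_cat10 x k d :
  weight_bounded x k d -> weight_bounded (x ++ [:: true; false]) k.+1 d.
Proof.
rewrite /weight_bounded golden_weight_cat10 => /andP[ge le].
have -> : (2 * k.+1 + 1 = 2 + (2 * k + 1))%N by lia.
by rewrite exprD !(mulrCA _ (phi ^+ 2)) !ler_pM2l ?exprn_gt0 // ge le.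
Qed.

Lemma weight_bounded_cat100 x k d :
  (stern_u x * (stern_u x + stern_v x) <= stern_v x * stern_v x)%N ->
  weight_bounded x k d -> weight_bounded (x ++ [:: true; false; false]) k d.+1.
Proof.
rewrite /weight_bounded => ratio /andP[ge le]; apply/andP; split.
- apply: le_trans _ (golden_weight_cat100_ge x).
  by rewrite exprS -mulrA ler_pM2l //; have := phi_gt0; lra.
- apply: le_trans (golden_weight_cat100_le ratio) _.
  by rewrite exprS -[leRHS]mulrA ler_pM2l //; lra.
Qed.

Lemma inB_weight_bounded x : inB x ->
  exists k d, [/\ count (fun b => ~~ b) x = k + 2 * d, count id x = k + d
                & weight_bounded x k d]%N.
Proof.
elim=> [|| y By [k [d [zeros ones wb]]] | y By [k [d [zeros ones wb]]]].
- exists 1%N, 0%N; split=> //; rewrite -[[:: true; false]]cat0s.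
  exact: weight_bounded_cat10 weight_bounded_nil.
- exists 0%N, 1%N; split=> //; rewrite -[[:: true; false; false]]cat0s.
  exact: weight_bounded_cat100 weight_bounded_nil.
- exists k.+1, d; rewrite !count_cat zeros ones /=.
  by split; [lia | lia | apply: weight_bounded_cat10].
- exists k, d.+1; rewrite !count_cat zeros ones /=.
  by split; [lia | lia | apply: weight_bounded_cat100 => //; apply: stern_uv_ratio].
Qed.

Lemma golden_weight_ge_v x : inB x -> (phi + 1/3) * (stern_v x)%:R <= golden_weight x.
Proof.
move/stern_v_le_3u; rewrite -(ler_nat R) natrM /golden_weight.
have pos := phi_gt0; move: (ler0n R (stern_u x)) (ler0n R (stern_v x)).
by move: (stern_u x)%:R (stern_v x)%:R => u v *; nra.
Qed.

Lemma golden_weight_le_v x : inB x -> golden_weight x <= (2 * phi - 1) * (stern_v x)%:R.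
Proof.
move/stern_uv_ratio; rewrite -(ler_nat R) !natrM natrD /golden_weight => ratio.
by have := golden_ratio_le (ler0n _ _) (ler0n _ _) ratio; lra.
Qed.

Lemma golden_gap : (19/5) ^+ 3 * (2 * phi - 1) < (phi + 2) * phi ^+ 6 * (phi + 1/3).
Proof.
have [lo hi] := andP golden_bounds; have sq := phi_sq.
have -> : phi ^+ 6 = 8 * phi + 5.
  apply: (golden_reduce (c := phi ^+ 4 + phi ^+ 3 + 2 * phi ^+ 2 + 3 * phi + 5)).
  by ring.
nra.
Qed.

(* With P = phi^(2k+1):  (phi + 1/3)(2 phi - 1) v(x) <= (2 phi - 1) P (19/5)^3
   < (phi + 1/3) P (phi + 2) phi^6 <= (phi + 1/3)(2 phi - 1) v(y). *)
Lemma stern_v_lt_of_blocks x y k : inB x -> inB y ->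
  weight_bounded x k 3 -> weight_bounded y (k + 3) 1 -> (stern_v x < stern_v y)%N.
Proof.
move=> Bx By /andP[_ wx_le] /andP[wy_ge _]; rewrite -(ltr_nat R).
have vx_le := golden_weight_ge_v Bx; have vy_ge := golden_weight_le_v By.
have gap := golden_gap; have [lo hi] := andP golden_bounds.
have P_gt0 : 0 < phi ^+ (2 * k + 1) by rewrite exprn_gt0.
move: wy_ge; rewrite expr1 (_ : (2 * (k + 3) + 1 = 6 + (2 * k + 1))%N); last by lia.
rewrite exprD mulrA; move: vx_le vy_ge wx_le gap P_gt0.
set a := phi + 1/3; set b := 2 * phi - 1; set c1 := (19/5) ^+ 3; set c2 := _ * phi ^+ 6.
have a_gt0 : 0 < a by rewrite /a; lra.
have b_gt0 : 0 < b by rewrite /b; lra.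
move: (golden_weight x) (golden_weight y) (stern_v x)%:R (stern_v y)%:R => wx wy vx vy.
move: (phi ^+ _) => P vx_le vy_ge wx_le gap P_gt0 wy_ge.
have Pgap : (c1 * b) * P < (c2 * a) * P by rewrite ltr_pM2r.
have : a * b * vx < a * b * vy by nra.
by rewrite ltr_pM2l // mulr_gt0.
Qed.

End GoldenWeight.

Theorem mainTheorem12 (x y : seq bool) :
  inB x -> inB y -> size x = size y ->
  delta x = (Posz 3) -> delta y = (Posz 1) ->
  stern_s (bin_val x) < stern_s (bin_val y).
Proof.
move=> Bx By size_xy delta_x delta_y.
have phi_sq := golden_sq realalg; have phi_gt0 := golden_gt0 realalg.
have [kx [dx [zeros_x ones_x wx]]] := inB_weight_bounded phi_sq phi_gt0 Bx.
have [ky [dy [zeros_y ones_y wy]]] := inB_weight_bounded phi_sq phi_gt0 By.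
have [dx_eq dy_eq ky_eq] : [/\ dx = 3, dy = 1 & ky = kx + 3].
  move: size_xy delta_x delta_y; rewrite /delta -!(count_predC id).
  by rewrite zeros_x ones_x zeros_y ones_y => *; split; lia.
subst dx dy ky; rewrite -[stern_s _]/(stern_v x) -[stern_s _]/(stern_v y).
exact: (stern_v_lt_of_blocks phi_sq phi_gt0 Bx By wx wy).
Qed.
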